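(* Let $n\geq1$ and $1\leq k\leq n$. Then there exists $\eta\in\Omega$ with $\eta\neq\eta_k$ such that $f_k(m_{J_\eta})=f_k(m_{J_{\eta_k}})$.
   Context: $f_k(v)=kv_1+(1-k)v_2$. $\Lambda_{3,n}=\{\beta\in\mathbb N^3:1\leq|\beta|\leq n\}$; $A_n=\begin{pmatrix}1&1&n\\0&1&n+1\end{pmatrix}$; for $J\subset\Lambda_{3,n}$, $m_J=\sum_{\beta\in J}A_n\beta$. $\Omega$ is the set of $\eta=(z,d_0,\ldots,d_r)$ with $z\in\{0,1\}$, $d_0=0$, $d_i\geq1$ ($1\leq i\leq r$), $\sum d_i=n$. For $j\in\{1,\ldots,n\}$, $t$ unique with $\sum_{i<t}d_i<j\leq\sum_{i\leq t}d_i$, $c=j-\sum_{i<t}d_i$; $v_{j,\eta}=(\sum_{i\text{ odd},i<t}d_i+c,0)$ if $z=1,t$ odd; $(0,\sum_{i\text{ even},i<t}d_i+c)$ if $z=1,t$ even; $(0,\sum_{i\text{ odd},i<t}d_i+c)$ if $z=0,t$ odd; $(\sum_{i\text{ even},i<t}d_i+c,0)$ if $z=0,t$ even. $T_{j,\eta}=\{v_{j,\eta}+p(1,1):0\leq p\leq n-j\}$, $T_{0,\eta}=\{(p,p):1\leq p\leq n\}$, $r_{j,\eta}=n\pi_2(v_{j,\eta})$, $T'_\eta=T_{0,\eta}\cup\bigcup_{j=1}^n(T_{j,\eta}+r_{j,\eta}(1,1))$, and $J_\eta=\{\beta\in\Lambda_{3,n}:A_n\beta\in T'_\eta\}$ (which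 $\beta\mapsto A_n\beta$ maps bijectively onto $T'_\eta$). $\eta_k$: $z_k=1$ if $k\leq n+1-k$, else $0$; $d_{k,0}=0$; for $l\geq1$, $O_l=\sum_{j\text{ odd},j\leq l-1}d_{k,j}$, $E_l=\sum_{j\text{ even},j\leq l-1}d_{k,j}$; $t_l=\max\{m\in\mathbb N:mk\leq(E_l+1)(n+1-k)\}$ ($z_k=1$, $l$ odd), $\max\{m:m(n+1-k)\leq(O_l+1)k\}$ ($z_k=1$, $l$ even), $\max\{m:m(n+1-k)\leq(E_l+1)k\}$ ($z_k=0$, $l$ odd), $\max\{m:mk\leq(O_l+1)(n+1-k)\}$ ($z_k=0$, $l$ even); $s_1=0$, $s_l=O_l$ (odd $l>1$), $s_l=E_l$ (even $l$); $d_{k,l}=\min\{n-\sum_{j<l}d_{k,j},t_l-s_l\}$, stopping at first $r$ with $\sum_{j\leq r}d_{k,j}=n$; $\eta_k=(z_k,d_{k,0},\ldots,d_{k,r})\in\Omega$. *)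

From mathcomp Require Import all_boot all_order all_algebra.
Set Implicit Arguments. Unset Strict Implicit. Unset Printing Implicit Defensive.
Import GRing.Theory Num.Theory.

Definition fk (k : nat) (v : nat * nat) : int :=
  (k%:Z * (v.1)%:Z + (1 - k%:Z) * (v.2)%:Z)%R.

(* Lambda_{3,n} = { beta in N^3 : 1 <= |beta| <= n }, enumerated without
   repetition (every coordinate is automatically <= n). *)
Definition Lambda3 (n : nat) : seq (nat * nat * nat) :=
  [seq b <- flatten [seq [seq (a, b, c) | b <- iota 0 n.+1, c <- iota 0 n.+1] | a <- iota 0 n.+1]
   | (1 <= b.1.1 + b.1.2 + b.2 <= n)].

Definition An (n : nat) (b : nat * nat * nat) : nat * nat :=
  (b.1.1 + b.1.2 + n * b.2, b.1.2 + n.+1 * b.2).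

Definition mJ (n : nat) (J : pred (nat * nat * nat)) : nat * nat :=
  (\sum_(b <- Lambda3 n | J b) (An n b).1, \sum_(b <- Lambda3 n | J b) (An n b).2).

(* eta = (z, d_0, d_1, ..., d_r) is represented as (z, [:: d_1; ...; d_r]) :
   z = true means z = 1, z = false means z = 0, and d_0 = 0 is implicit. *)
Definition Omega (n : nat) (eta : bool * seq nat) : bool :=
  all (fun d => 0 < d) eta.2 && (sumn eta.2 == n).

Definition oddsum (ds : seq nat) : nat :=
  \sum_(0 <= i < size ds | odd i.+1) nth 0 ds i.
Definition evensum (ds : seq nat) : nat :=
  \sum_(0 <= i < size ds | ~~ odd i.+1) nth 0 ds i.

(* t = the (unique, for eta in Omega and 1 <= j <= n) index t >= 1 with
   sum_{i<t} d_i < j <= sum_{i<=t} d_i, i.e. the least t with j <= d_1+...+d_t. *)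
Definition tidx (ds : seq nat) (j : nat) : nat :=
  (find (fun i => j <= sumn (take i.+1 ds)) (iota 0 (size ds))).+1.

Definition vpt (eta : bool * seq nat) (j : nat) : nat * nat :=
  let ds := eta.2 in
  let t := tidx ds j in
  let pre := take t.-1 ds in
  let c := j - sumn pre in
  let O := oddsum pre in
  let E := evensum pre in
  if eta.1 then
    (if odd t then (O + c, 0) else (0, E + c))
  else
    (if odd t then (0, O + c) else (E + c, 0)).

Definition rj (n : nat) (eta : bool * seq nat) (j : nat) : nat := n * (vpt eta j).2.

(* membership in T'_eta = T_0 u U_{j=1}^n (T_{j,eta} + r_{j,eta}(1,1)) *)
Definition inTprime (n : nat) (eta : bool * seq nat) (x : nat * nat) : bool :=
  ((x.1 == x.2) && (1 <= x.1 <= n))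
  || has (fun j => has (fun p =>
            x == ((vpt eta j).1 + p + rj n eta j, (vpt eta j).2 + p + rj n eta j))
            (iota 0 (n - j).+1))
         (iota 1 n).

Definition Jeta (n : nat) (eta : bool * seq nat) : pred (nat * nat * nat) :=
  fun b => inTprime n eta (An n b).

(* max { m in N : m * a <= b } for a > 0, which is b %/ a (see maxmul_spec). *)
Definition maxmul (a b : nat) : nat := b %/ a.

Lemma maxmul_spec a b m : 0 < a -> (m <= maxmul a b) = (m * a <= b).
Proof. by move=> a0; rewrite /maxmul leq_divRL. Qed.

(* One step of the construction of eta_k: ds = [:: d_{k,1}; ...; d_{k,l-1}],
   returns d_{k,l}. *)
Definition dstep (n k : nat) (z : bool) (l : nat) (ds : seq nat) : nat :=
  let O := oddsum ds in
  let E := evensum ds in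
  let t :=
    if z then
      (if odd l then maxmul k ((E + 1) * (n + 1 - k))
       else maxmul (n + 1 - k) ((O + 1) * k))
    else
      (if odd l then maxmul (n + 1 - k) ((E + 1) * k)
       else maxmul k ((O + 1) * (n + 1 - k))) in
  let s := if l == 1 then 0 else if odd l then O else E in
  minn (n - sumn ds) (t - s).

(* iterate until the first r with sum_{j<=r} d_{k,j} = n (fuel bounds the
   number of steps; n steps suffice since every d_{k,l} >= 1). *)
Fixpoint dgen (n k : nat) (z : bool) (fuel l : nat) (ds : seq nat) : seq nat :=
  if sumn ds == n then ds else
  match fuel with
  | 0 => ds
  | fuel'.+1 => dgen n k z fuel' l.+1 (rcons ds (dstep n k z l ds))
  end.

Definition eta_k (n k : nat) : bool * seq nat :=
  let z := k <= n + 1 - k in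
  (z, dgen n k z n 1 [::]).

From mathcomp Require Import all_boot all_order all_algebra zify ring.
Set Implicit Arguments. Unset Strict Implicit. Unset Printing Implicit Defensive.
Import GRing.Theory.

(* The greedy construction of eta_k keeps the running sums (O, E) of the odd- and
   even-indexed blocks in the band O q <= (E + 1) p, E p <= (O + 1) q, where
   p = max(k, n+1-k) and q = min(k, n+1-k).  As O + E = n = p + q - 1 at the end,
   it stops at (p, q - 1) or (p - 1, q), according to the parity of the number of
   blocks, so the last point v_{n,eta_k} is at distance p (resp. q) on the odd
   (resp. even) axis.  Moving the last unit of the last block to the other axis
   (splitting it off as a new block, or merging it into the previous one) keeps
   every v_j with j < n and sends v_n to distance q (resp. p) on the other axis.
   Since T_{n,eta} + r_{n,eta}(1,1) is the single point v_n + n pi_2(v_n)(1,1),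
   J_eta differs from J_{eta_k} by exchanging one element, and f_k takes the
   value p q at both: f_k is k c at (c, 0) and (n + 1 - k) c at (n c, (n + 1) c). *)

(** * Block sums and the points v_{j,eta} *)

Definition blocksum (b : bool) (ds : seq nat) : nat :=
  if b then oddsum ds else evensum ds.

Lemma blocksum_nil b : blocksum b [::] = 0.
Proof. by case: b; rewrite /blocksum /oddsum /evensum big_geq. Qed.

Lemma blocksum_rcons b ds d :
  blocksum b (rcons ds d) = blocksum b ds + (if b == ~~ odd (size ds) then d else 0).
Proof.
rewrite /blocksum /oddsum /evensum size_rcons.
case: b; rewrite big_mkcond big_nat_recr //= nth_rcons ltnn eqxx [in RHS]big_mkcond;
  congr (_ + _); try by case: (odd _).
all: by apply: eq_big_nat => i /andP[_ lt_i]; rewrite nth_rcons lt_i.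
Qed.

Lemma blocksum_rcons_new ds d :
  blocksum (~~ odd (size ds)) (rcons ds d) = blocksum (~~ odd (size ds)) ds + d.
Proof. by rewrite blocksum_rcons eqxx. Qed.

Lemma blocksum_rcons_old ds d :
  blocksum (odd (size ds)) (rcons ds d) = blocksum (odd (size ds)) ds.
Proof. by rewrite blocksum_rcons; case: (odd _); rewrite addn0. Qed.

Lemma blocksum_add b ds : blocksum b ds + blocksum (~~ b) ds = sumn ds.
Proof.
elim/last_ind: ds => [|ds d IH]; first by rewrite !blocksum_nil.
by rewrite !blocksum_rcons sumn_rcons -IH; clear IH; case: b; case: (odd _) => /=; lia.
Qed.

Lemma blocksum_le_sumn b ds : blocksum b ds <= sumn ds.
Proof. by rewrite -(blocksum_add b) leq_addr. Qed.

Definition axis_point (z b : bool) (c : nat) : nat * nat :=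
  if z == b then (c, 0) else (0, c).

Definition on_axis (w : nat * nat) : bool := (w.1 == 0) || (w.2 == 0).

Lemma axis_point_on_axis z b c : on_axis (axis_point z b c).
Proof. by rewrite /axis_point /on_axis; case: (z == b); rewrite eqxx ?orbT. Qed.

Lemma axis_point_norm z b c : (axis_point z b c).1 + (axis_point z b c).2 = c.
Proof. by rewrite /axis_point; case: (z == b) => /=; lia. Qed.

Lemma axis_point_inj z b b' c c' :
  0 < c -> axis_point z b c = axis_point z b' c' -> b = b' /\ c = c'.
Proof.
move=> c_gt0; rewrite /axis_point.
by case: z; case: b; case: b' => //= -[] *; subst; first [by [] | exfalso; lia].
Qed.

Lemma vptE z ds j :
  let t := tidx ds j in let pre := take t.-1 ds in
  vpt (z, ds) j = axis_point z (odd t) (blocksum (odd t) pre + (j - sumn pre)).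
Proof. by rewrite /vpt /axis_point /blocksum /=; case: z; case: (odd _). Qed.

Lemma vpt_on_axis eta j : on_axis (vpt eta j).
Proof. by case: eta => z ds; rewrite vptE axis_point_on_axis. Qed.

Lemma sumn_take_le i ds : sumn (take i ds) <= sumn ds.
Proof. by rewrite -{2}(cat_take_drop i ds) sumn_cat leq_addr. Qed.

Lemma last_gt0 ds : all (fun d => 0 < d) ds -> 0 < sumn ds -> 0 < last 0 ds.
Proof. by case/lastP: ds => [//|s d]; rewrite all_rcons last_rcons => /andP[]. Qed.

Lemma tidx_le_size ds j : 0 < j <= sumn ds -> tidx ds j <= size ds.
Proof.
move=> /andP[j_gt0 le_j]; rewrite /tidx -[X in _ < X](size_iota 0) -has_find.
case: ds le_j => [|x ds] le_j; first by rewrite /= in le_j; lia.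
apply/hasP; exists (size ds); first by rewrite mem_iota /=; lia.
by rewrite -/(size (x :: ds)) take_size.
Qed.

Lemma tidx_rcons ds d j : 0 < j <= sumn ds -> tidx (rcons ds d) j = tidx ds j.
Proof.
move=> j_range; rewrite /tidx size_rcons -[(size ds).+1]addn1 iotaD find_cat.
have eq_pred : {in iota 0 (size ds), (fun i => j <= sumn (take i.+1 (rcons ds d)))
                                     =1 (fun i => j <= sumn (take i.+1 ds))}.
  by move=> i; rewrite mem_iota add0n => /andP[_ lt_i] /=; rewrite -cats1 takel_cat.
rewrite (eq_in_has eq_pred) (eq_in_find eq_pred) has_find size_iota.
by have := tidx_le_size j_range; rewrite /tidx => ->.
Qed.

Lemma tidx_rcons_last ds d c : 0 < c <= d -> tidx (rcons ds d) (sumn ds + c) = (size ds).+1.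
Proof.
move=> /andP[c_gt0 le_cd]; rewrite /tidx size_rcons -[(size ds).+1]addn1 iotaD find_cat.
have -> : has (fun i => sumn ds + c <= sumn (take i.+1 (rcons ds d))) (iota 0 (size ds)) = false.
  apply/hasP => -[i]; rewrite mem_iota add0n => /andP[_ lt_i].
  by rewrite -cats1 takel_cat //; have := sumn_take_le i.+1 ds; lia.
by rewrite size_iota /= take_oversize ?size_rcons // sumn_rcons leq_add2l le_cd addn0 addn1.
Qed.

Lemma vpt_rcons z ds d j : 0 < j <= sumn ds -> vpt (z, rcons ds d) j = vpt (z, ds) j.
Proof.
move=> j_range; rewrite !vptE tidx_rcons //.
by rewrite -cats1 takel_cat //; have := tidx_le_size j_range; lia.
Qed.

Lemma vpt_rcons_last z ds d c : 0 < c <= d ->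
  vpt (z, rcons ds d) (sumn ds + c) =
  axis_point z (~~ odd (size ds)) (blocksum (~~ odd (size ds)) ds + c).
Proof.
move=> c_range; rewrite vptE tidx_rcons_last //= -cats1 take_size_cat //.
by rewrite addKn.
Qed.

Lemma vpt_bound z ds j : 0 < j <= sumn ds ->
  exists b c, [/\ vpt (z, ds) j = axis_point z b c, 0 < c & c <= blocksum b ds].
Proof.
elim/last_ind: ds j => [|s d IH] j; first by rewrite /=; lia.
rewrite sumn_rcons => j_range; case: (leqP j (sumn s)) => [le_js | lt_sj].
  have [|b [c [vpt_j c_gt0 le_c]]] := IH j; first lia.
  exists b, c; rewrite vpt_rcons; last lia.
  by rewrite vpt_j blocksum_rcons; split => //; lia.
have -> : j = sumn s + (j - sumn s) by lia.
rewrite vpt_rcons_last; last lia.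
exists (~~ odd (size s)), (blocksum (~~ odd (size s)) s + (j - sumn s)).
by rewrite blocksum_rcons_new; split => //; lia.
Qed.

Lemma vpt_norm z ds j : 0 < j <= sumn ds ->
  0 < (vpt (z, ds) j).1 + (vpt (z, ds) j).2 <= sumn ds.
Proof.
move=> /(vpt_bound z) [b [c [-> c_gt0 le_c]]]; rewrite axis_point_norm c_gt0 /=.
by apply: (leq_trans le_c); apply: blocksum_le_sumn.
Qed.

Lemma vpt_sumn z ds : 0 < last 0 ds ->
  vpt (z, ds) (sumn ds) = axis_point z (odd (size ds)) (blocksum (odd (size ds)) ds).
Proof.
case/lastP: ds => [//|s d]; rewrite last_rcons => d_gt0.
rewrite sumn_rcons vpt_rcons_last; last lia.
by rewrite size_rcons /= blocksum_rcons_new.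
Qed.

Lemma vpt_sumn_fresh z ds j : 0 < last 0 ds -> 0 < j < sumn ds ->
  vpt (z, ds) j != vpt (z, ds) (sumn ds).
Proof.
move=> last_gt0 j_range; rewrite vpt_sumn //.
case/lastP: ds last_gt0 j_range => [//|s d]; rewrite last_rcons sumn_rcons => d_gt0 j_range.
rewrite size_rcons /= blocksum_rcons_new; apply/eqP.
case: (leqP j (sumn s)) => [le_js | lt_sj].
  have [|b [c [vpt_j c_gt0 le_c]]] := vpt_bound z (ds := s) (j := j); first lia.
  rewrite vpt_rcons ?vpt_j; last lia.
  by move/(axis_point_inj c_gt0) => [eb]; rewrite -eb in le_c *; lia.
have -> : j = sumn s + (j - sumn s) by lia.
by rewrite vpt_rcons_last; [move/axis_point_inj => []|]; lia.
Qed.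

Lemma vpt_split_last z s d j : 0 < j <= sumn s + d ->
  vpt (z, rcons (rcons s d) 1) j = vpt (z, rcons s d.+1) j.
Proof.
move=> j_range; rewrite vpt_rcons ?sumn_rcons //.
case: (leqP j (sumn s)) => [le_js | lt_sj]; first by rewrite !vpt_rcons //; lia.
have -> : j = sumn s + (j - sumn s) by lia.
by rewrite !vpt_rcons_last //; lia.
Qed.

(** * The greedy construction of eta_k *)

(* [a] and [c] are the final block sums of the parity of the last block and of
   the other one, [u] and [v] their weights, and [l] the length of the last block. *)
Lemma band_endpoint a c u v l : a + c + 1 = u + v -> 0 < u -> 0 < l <= a ->
  a * u <= (c + 1) * v -> c * v <= (a - l + 1) * u -> a = v /\ c + 1 = u.
Proof.
move=> sum_ac u_gt0 l_range below above.
have le_av : a <= v.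
  rewrite leqNgt; apply/negP => lt_va.
  have cv_le : (c + 1) * v <= (u - 1) * v by rewrite leq_mul2r; lia.
  have au_ge : (v + 1) * u <= a * u by rewrite leq_mul2r; lia.
  have : (u - 1) * v < (v + 1) * u by rewrite mulnDl mul1n mulnBl mul1n mulnC; lia.
  lia.
have lt_cu : c < u.
  rewrite ltnNge; apply/negP => le_uc.
  have cv_ge : u * v <= c * v by rewrite leq_mul2r le_uc orbT.
  have au_le : (a - l + 1) * u <= (v - 1) * u by rewrite leq_mul2r; lia.
  have : (v - 1) * u < u * v by rewrite mulnBl mul1n mulnC; lia.
  lia.
lia.
Qed.

Lemma last_le_blocksum ds : last 0 ds <= blocksum (odd (size ds)) ds.
Proof.
case/lastP: ds => [|ds d]; first by rewrite blocksum_nil.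
by rewrite last_rcons size_rcons /= blocksum_rcons_new leq_addl.
Qed.

Section Greedy.

Variables (n : nat) (w : bool -> nat).
Hypotheses (w_true_gt0 : 0 < w true) (w_true_le : w true <= w false)
           (w_sum : w true + w false = n.+1).

Definition greedy_step (ds : seq nat) : nat :=
  let L := odd (size ds) in
  minn (n - sumn ds) (((blocksum L ds + 1) * w L) %/ w (~~ L) - blocksum (~~ L) ds).

(* Besides positivity and [sumn ds <= n]: the block sums (O, E) lie in the band
   around the line O w_true = E w_false; the band inequality for the parity other
   than that of the last block already held before that block was added; and an
   unfinished sequence leaves room for a nonempty next block. *)
Definition greedy_inv (ds : seq nat) : Prop :=
  let L := odd (size ds) in
  [/\ all (fun d => 0 < d) ds, sumn ds <= n,
      forall b, blocksum b ds * w b <= (blocksum (~~ b) ds + 1) * w (~~ b),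
      0 < size ds -> blocksum (~~ L) ds * w (~~ L) <= (blocksum L ds - last 0 ds + 1) * w L &
      sumn ds < n -> (blocksum (~~ L) ds + 1) * w (~~ L) <= (blocksum L ds + 1) * w L].

Lemma w_gt0 b : 0 < w b.
Proof. by case: b; lia. Qed.

Lemma greedy_inv_nil : greedy_inv [::].
Proof.
rewrite /greedy_inv; split => // [b|_]; first by rewrite !blocksum_nil.
by rewrite !blocksum_nil /= !add0n !mul1n.
Qed.

Lemma greedy_inv_rcons ds : greedy_inv ds -> sumn ds < n ->
  greedy_inv (rcons ds (greedy_step ds)).
Proof.
rewrite /greedy_inv /greedy_step; set L := odd (size ds).
move=> [pos le_n band _ open] lt_n; have {}open := open lt_n.
set t := (blocksum L ds + 1) * w L %/ w (~~ L).
set d := minn _ _.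
have t_below : t * w (~~ L) <= (blocksum L ds + 1) * w L by apply: leq_divM.
have t_above : (blocksum L ds + 1) * w L < t.+1 * w (~~ L) by apply: ltn_ceil; apply: w_gt0.
have lt_t : blocksum (~~ L) ds < t by rewrite /t leq_divRL ?w_gt0 // -addn1.
have d_le : blocksum (~~ L) ds + d <= t by rewrite /d; lia.
rewrite size_rcons /= -/L negbK last_rcons all_rcons sumn_rcons.
rewrite blocksum_rcons_new blocksum_rcons_old pos andbT; split.
- by rewrite /d; lia.
- by rewrite /d; lia.
- move=> b; have [-> | ->] : b = L \/ b = ~~ L by case: b; case: (L); auto.
  + rewrite blocksum_rcons_new blocksum_rcons_old; apply: leq_trans (band L) _.
    by rewrite leq_mul2r leq_add2r leq_addr orbT.
  + rewrite negbK blocksum_rcons_new blocksum_rcons_old; apply: leq_trans t_below.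
    by rewrite leq_mul2r d_le orbT.
- by move=> _; rewrite addnK; apply: band.
- move=> lt_n'; have -> : blocksum (~~ L) ds + d = t by rewrite /d; lia.
  by rewrite [t + 1]addn1; apply: ltnW.
Qed.

Lemma greedy_inv_blocksum ds : greedy_inv ds -> sumn ds = n ->
  let L := odd (size ds) in blocksum L ds = w (~~ L) /\ blocksum (~~ L) ds + 1 = w L.
Proof.
move=> [pos _ band last_band _] sum_n L.
have last_pos : 0 < last 0 ds by apply: last_gt0; rewrite ?sum_n //; lia.
have size_gt0 : 0 < size ds by move: last_pos; case: (ds).
apply: (@band_endpoint _ _ _ _ (last 0 ds)).
- have w_add : w L + w (~~ L) = n.+1 by case: (L); rewrite // addnC.
  by rewrite w_add -sum_n -(blocksum_add L) addn1.
- exact: w_gt0.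
- by rewrite last_pos last_le_blocksum.
- by have := band L; rewrite /L.
- exact: last_band.
Qed.

End Greedy.

(* The weights of the construction of eta_k, which are also the slopes of f_k
   along the axes carrying the odd and even blocks (fk_Tshift_axis_point). *)
Definition wt (n k : nat) (b : bool) : nat :=
  if b then minn k (n + 1 - k) else maxn k (n + 1 - k).

Section EtaK.

Variables n k : nat.
Hypothesis k_range : 1 <= k <= n.

Let wt_true_gt0 : 0 < wt n k true.
Proof. by rewrite /wt; lia. Qed.

Let wt_true_le : wt n k true <= wt n k false.
Proof. by rewrite /wt; lia. Qed.

Let wt_sum : wt n k true + wt n k false = n.+1.
Proof. by rewrite /wt addn_min_max; lia. Qed.

Lemma dstep_greedy ds : dstep n k (k <= n + 1 - k) (size ds).+1 ds = greedy_step n (wt n k) ds.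
Proof.
rewrite /dstep /greedy_step /wt /maxmul.
have -> : (if (size ds).+1 == 1 then 0 else if odd (size ds).+1 then oddsum ds else evensum ds)
          = blocksum (~~ odd (size ds)) ds.
  by case: ds => [|x ds]; [rewrite blocksum_nil | rewrite /blocksum /=; case: (odd _)].
by case: leqP => _ /=; case: (odd _).
Qed.

Lemma dgen_greedy fuel ds : greedy_inv n (wt n k) ds -> n - sumn ds <= fuel ->
  let ds' := dgen n k (k <= n + 1 - k) fuel (size ds).+1 ds in
  greedy_inv n (wt n k) ds' /\ sumn ds' = n.
Proof.
elim: fuel ds => [|fuel IH] ds inv_ds fuel_ds /=; case: eqP => // ne_n;
  have [_ le_n _ _ _] := inv_ds; first lia.
have lt_n : sumn ds < n by lia.
have inv' := greedy_inv_rcons wt_true_gt0 wt_true_le wt_sum inv_ds lt_n.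
have := IH _ inv'; rewrite size_rcons dstep_greedy; apply.
have [pos' _ _ _ _] := inv'; move: pos'; rewrite all_rcons sumn_rcons => /andP[step_gt0 _].
lia.
Qed.

Lemma eta_k_greedy : greedy_inv n (wt n k) (eta_k n k).2 /\ sumn (eta_k n k).2 = n.
Proof. exact: (dgen_greedy (greedy_inv_nil _ wt_true_le) (leq_subr _ _)). Qed.

Lemma Omega_eta_k : Omega n (eta_k n k).
Proof. by have [[pos _ _ _ _] sum_n] := eta_k_greedy; rewrite /Omega pos sum_n eqxx. Qed.

Lemma blocksum_eta_k : let ds := (eta_k n k).2 in let L := odd (size ds) in
  blocksum L ds = wt n k (~~ L) /\ blocksum (~~ L) ds + 1 = wt n k L.
Proof.
have [inv sum_n] := eta_k_greedy.
exact: (greedy_inv_blocksum wt_true_gt0 wt_true_le wt_sum inv sum_n).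
Qed.

End EtaK.

(** * The sum m_J and the set T'_eta *)

Lemma uniq_flatten_map (S T : eqType) (key : T -> S) (A : S -> seq T) (s : seq S) :
  uniq s -> (forall x, uniq (A x)) -> (forall x y, y \in A x -> key y = x) ->
  uniq (flatten (map A s)).
Proof.
move=> uniq_s uniq_A keyA; elim: s uniq_s => [|x s IH] //= /andP[x_notin uniq_s].
rewrite cat_uniq uniq_A IH // andbT; apply/hasP => -[y /flatten_mapP[x' x'_in y_in] y_in'].
by move: x_notin; rewrite -(keyA _ _ y_in') (keyA _ _ y_in) x'_in.
Qed.

Lemma mem_Lambda3 n b : (b \in Lambda3 n) = (1 <= b.1.1 + b.1.2 + b.2 <= n).
Proof.
case: b => [[x y] z]; rewrite /Lambda3 mem_filter.
case: (boolP (1 <= _ <= n)) => // range; rewrite andTb; rewrite /= in range.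
apply/flatten_mapP; exists x; first by rewrite mem_iota; lia.
by apply/allpairsP; exists (y, z); rewrite !mem_iota /=; split=> //; lia.
Qed.

Lemma uniq_Lambda3 n : uniq (Lambda3 n).
Proof.
rewrite filter_uniq // (uniq_flatten_map (key := fun t => t.1.1)) ?iota_uniq //.
  move=> a; rewrite allpairs_uniq ?iota_uniq // => -[b c] [b' c'] _ _ /= [-> ->] //.
by move=> a t /allpairsP[[b c] [_ _ ->]].
Qed.

Lemma An_inj n : {in Lambda3 n &, injective (An n)}.
Proof.
move=> [[x y] z] [[x' y'] z']; rewrite !mem_Lambda3 /= => range range' [e1 e2].
have y_eq : y = y'.
  have := congr1 (modn^~ n.+1) e2; rewrite /= ![_ + n.+1 * _]addnC ![n.+1 * _]mulnC !modnMDl.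
  by rewrite !modn_small //; lia.
subst y'; have z_eq : z = z' by move/eqP: e2; rewrite eqn_add2l eqn_mul2l => /eqP.
by subst z'; congr (_, _, _); lia.
Qed.

Lemma big_pred_orU1_inj (V : nmodType) (I T : eqType) (s : seq I) (f : I -> T)
    (D : pred T) (F : I -> V) i0 :
  uniq s -> {in s &, injective f} -> i0 \in s -> ~~ D (f i0) ->
  (\sum_(i <- s | D (f i) || (f i == f i0)) F i = \sum_(i <- s | D (f i)) F i + F i0)%R.
Proof.
move=> uniq_s inj_f i0_in Di0.
rewrite (big_rem _ i0_in) (big_rem _ i0_in) eqxx orbT (negbTE Di0) /= add0r addrC.
congr (_ + _)%R; rewrite big_seq_cond [RHS]big_seq_cond; apply: eq_bigl => i.
rewrite mem_rem_uniq // inE; case: (eqVneq i i0) => //= ne_i.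
case i_in : (i \in s) => //=.
by rewrite (inj_in_eq inj_f) // (negbTE ne_i) orbF.
Qed.

Lemma fk_mJ k n (J : pred (nat * nat * nat)) :
  fk k (mJ n J) = (\sum_(b <- Lambda3 n | J b) fk k (An n b))%R.
Proof.
rewrite /fk /mJ /= -!natz !natr_sum !mulr_sumr -big_split /=.
by apply: eq_bigr => b _; rewrite !natz.
Qed.

(* The point v + p (1,1) + n pi_2(v) (1,1) of T'_eta; for j = n the whole set
   T_{n,eta} + r_{n,eta}(1,1) is the single point [Tshift n v_{n,eta} 0]. *)
Definition Tshift (n : nat) (w : nat * nat) (p : nat) : nat * nat :=
  (w.1 + p + n * w.2, w.2 + p + n * w.2).

Definition Thead (n : nat) (eta : bool * seq nat) (x : nat * nat) : bool :=
  ((x.1 == x.2) && (1 <= x.1 <= n))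
  || has (fun j => has (fun p => x == Tshift n (vpt eta j) p) (iota 0 (n - j).+1))
         (iota 1 n.-1).

Lemma inTprime_Thead n eta x : 0 < n ->
  inTprime n eta x = Thead n eta x || (x == Tshift n (vpt eta n) 0).
Proof.
move=> n_gt0; rewrite /inTprime /Thead -orbA; congr orb.
have -> : iota 1 n = iota 1 n.-1 ++ [:: n].
  by rewrite -[in LHS](prednK n_gt0) -[n.-1.+1]addn1 iotaD add1n prednK.
by rewrite has_cat /= subnn /= !orbF.
Qed.

Lemma eq_Thead n eta eta' : (forall j, 0 < j < n -> vpt eta' j = vpt eta j) ->
  Thead n eta' =1 Thead n eta.
Proof.
move=> eq_vpt x; rewrite /Thead; congr orb; apply: eq_in_has => j.
by rewrite mem_iota => j_range; rewrite eq_vpt //; lia.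
Qed.

Lemma Tshift_on_axis_inj n u w p : on_axis u -> on_axis w -> 0 < w.1 + w.2 ->
  Tshift n u p = Tshift n w 0 -> u = w.
Proof.
case: u => [u1 u2]; case: w => [w1 w2]; rewrite /on_axis /Tshift /=.
by move=> /orP[] /eqP-> /orP[] /eqP-> w_gt0 [e1 e2]; congr pair; nia.
Qed.

Lemma Thead_Tshift n eta w : on_axis w -> 0 < w.1 + w.2 ->
  (forall j, 0 < j < n -> vpt eta j != w) -> ~~ Thead n eta (Tshift n w 0).
Proof.
move=> w_axis w_gt0 fresh; rewrite /Thead negb_or; apply/andP; split.
  by case: w w_axis w_gt0 {fresh} => [w1 w2]; rewrite /on_axis /Tshift /= => /orP[] /eqP->; lia.
apply/hasPn => j; rewrite mem_iota => j_range; apply/hasPn => p _.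
apply/negP => /eqP /esym /Tshift_on_axis_inj eq_w.
by have := fresh j; rewrite eq_w ?vpt_on_axis ?eqxx //; lia.
Qed.

Lemma Tshift_An n w : on_axis w -> 0 < w.1 + w.2 <= n ->
  exists2 b, b \in Lambda3 n & An n b = Tshift n w 0.
Proof.
case: w => [w1 w2]; rewrite /on_axis /= => /orP[] /eqP-> w_range.
  by exists (0, 0, w2); rewrite ?mem_Lambda3 /An /Tshift /=; [lia | congr pair; lia].
by exists (w1, 0, 0); rewrite ?mem_Lambda3 /An /Tshift /=; [lia | congr pair; lia].
Qed.

Lemma eq_mJ n (J J' : pred (nat * nat * nat)) : J =1 J' -> mJ n J = mJ n J'.
Proof. by move=> eqJ; rewrite /mJ !(eq_bigl _ _ eqJ). Qed.

Lemma vpt_n_Omega n z ds : 0 < n -> Omega n (z, ds) ->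
  vpt (z, ds) n = axis_point z (odd (size ds)) (blocksum (odd (size ds)) ds).
Proof.
move=> n_gt0 /andP[pos /eqP sum_n]; rewrite -sum_n vpt_sumn //.
by apply: last_gt0; rewrite ?sum_n.
Qed.

Lemma fk_mJ_Jeta n k eta : 0 < n -> Omega n eta ->
  fk k (mJ n (Jeta n eta)) =
  (fk k (mJ n (Thead n eta \o An n)) + fk k (Tshift n (vpt eta n) 0))%R.
Proof.
case: eta => z ds n_gt0 /andP[pos /eqP sum_n].
have last_pos : 0 < last 0 ds by apply: last_gt0; rewrite ?sum_n.
have w_norm : 0 < (vpt (z, ds) n).1 + (vpt (z, ds) n).2 <= n.
  by have := vpt_norm z (ds := ds) (j := n); rewrite sum_n n_gt0 leqnn; apply.
have fresh j : 0 < j < n -> vpt (z, ds) j != vpt (z, ds) n.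
  by rewrite -sum_n; apply: vpt_sumn_fresh.
have [b0 b0_in An_b0] := Tshift_An (vpt_on_axis _ _) w_norm.
rewrite !fk_mJ /Jeta; under eq_bigl do rewrite inTprime_Thead //.
rewrite -An_b0 (big_pred_orU1_inj _ (uniq_Lambda3 n) (@An_inj n) b0_in) //.
by rewrite An_b0; apply: Thead_Tshift; rewrite ?vpt_on_axis //; case/andP: w_norm.
Qed.

Lemma fk_Tshift_axis_point n k b c : k <= n ->
  fk k (Tshift n (axis_point (k <= n + 1 - k) b c) 0) = Posz (wt n k b * c).
Proof.
move=> le_kn; have wP : ((n + 1 - k)%N%:Z = n%:Z + 1 - k%:Z)%R by lia.
rewrite /fk /Tshift /axis_point /wt; case: leqP => _; case: b => /=;
  rewrite ?wP !PoszD !PoszM ?wP /=; ring.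
Qed.

(** * Moving the last unit to the other axis *)

Definition last_flip (n : nat) (eta eta' : bool * seq nat) : Prop :=
  let L := odd (size eta.2) in
  [/\ Omega n eta', eta' <> eta,
      forall j, 0 < j < n -> vpt eta' j = vpt eta j &
      vpt eta' n = axis_point eta.1 (~~ L) (blocksum (~~ L) eta.2 + 1)].

Lemma last_flip_split z s d : all (fun x => 0 < x) s -> 0 < d ->
  last_flip (sumn s + d.+1) (z, rcons s d.+1) (z, rcons (rcons s d) 1).
Proof.
move=> pos d_gt0; split.
- by rewrite /Omega /= !all_rcons pos d_gt0 !sumn_rcons; apply/eqP; lia.
- by case=> /(congr1 size); rewrite !size_rcons; lia.
- by move=> j j_range; apply: vpt_split_last; lia.
have -> : sumn s + d.+1 = sumn (rcons s d) + 1 by rewrite sumn_rcons addn1 addnS.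
by rewrite vpt_rcons_last // !size_rcons /= negbK !blocksum_rcons_old.
Qed.

Lemma last_flip_merge z s d : all (fun x => 0 < x) s ->
  last_flip (sumn s + d.+1) (z, rcons (rcons s d) 1) (z, rcons s d.+1).
Proof.
move=> pos; split.
- by rewrite /Omega /= all_rcons pos sumn_rcons eqxx.
- by case=> /(congr1 size); rewrite !size_rcons; lia.
- by move=> j j_range; symmetry; apply: vpt_split_last; lia.
rewrite vpt_rcons_last //= !blocksum_rcons !size_rcons /=.
by case: (odd (size s)) => /=; congr axis_point; lia.
Qed.

(* For n = 1 there is no block to merge with: switching z moves v_1 instead. *)
Lemma last_flip_single z : last_flip 1 (z, [:: 1]) (~~ z, [:: 1]).
Proof.
split => //; first by case: z.
  by move=> j j_range; exfalso; lia.
have := @vpt_rcons_last (~~ z) [::] 1 1 isT; rewrite blocksum_nil add0n => ->.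
have evensum1 : blocksum false [:: 1] = 0 := etrans (blocksum_rcons_old [::] 1) (blocksum_nil false).
change (axis_point (~~ z) true 1 = axis_point z false (blocksum false [:: 1] + 1)).
by rewrite evensum1; case: z.
Qed.

Lemma exists_last_flip n eta : 0 < n -> Omega n eta -> exists eta', last_flip n eta eta'.
Proof.
case: eta => z ds n_gt0 /andP[pos /eqP sum_n].
case/lastP: ds pos sum_n => [|s d]; first by move=> _ sum_n; rewrite /= in sum_n; lia.
rewrite all_rcons sumn_rcons => /andP[d_gt0 pos] sum_n; subst n.
case: d d_gt0 n_gt0 => [//|d] _ _; case: (posnP d) => [-> | d_gt0].
  case/lastP: s pos => [|s e] pos; first by exists (~~ z, [:: 1]); apply: last_flip_single.
  exists (z, rcons s e.+1); rewrite sumn_rcons addn1 -addnS.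
  by apply: last_flip_merge; move: pos; rewrite all_rcons => /andP[].
by exists (z, rcons (rcons s d) 1); apply: last_flip_split.
Qed.

Theorem corollary3p9 (n k : nat) :
  1 <= n -> 1 <= k <= n ->
  exists eta : bool * seq nat,
    Omega n eta /\ eta <> eta_k n k /\
    fk k (mJ n (Jeta n eta)) = fk k (mJ n (Jeta n (eta_k n k))).
Proof.
move=> n_gt0 k_range; have Omega_k := Omega_eta_k k_range.
have [eta' [Omega' ne_eta' eq_vpt last']] := exists_last_flip n_gt0 Omega_k.
exists eta'; do 2 split => //.
rewrite !fk_mJ_Jeta // (eq_mJ _ (fun b => eq_Thead eq_vpt (An n b))); congr (_ + _)%R.
have [bs_L bs_nL] := blocksum_eta_k k_range.
have le_kn : k <= n by case/andP: k_range.
rewrite last' (vpt_n_Omega n_gt0 Omega_k) !fk_Tshift_axis_point //.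
by rewrite bs_L bs_nL mulnC.
Qed.
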